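(* Fix an active search instance $(h^\star,\mathcal D)$ with $\Pr(V=1)>0$ and costs $c_{\mathrm{rew}},c_{\mathrm{ver}}>0$, and consider the class of streaming policies described in the context. Then there exists a unique $\tau^\star\in(0,1)$ satisfying \[ c_{\mathrm{ver}}\,\mathbb E_{R\sim\mathcal D}\big[(h^\star(R)-\tau^\star)_+\big]=\tau^\star c_{\mathrm{rew}}, \] where $(u)_+=\max\{u,0\}$. Moreover, the optimal expected cost over streaming policies is $J^\star_{\mathrm{str}}(h^\star,\mathcal D)=c_{\mathrm{ver}}/\tau^\star$, and an optimal streaming policy is the threshold rule that verifies the current candidate with score $r$ if $h^\star(r)\ge\tau^\star$ and discards it if $h^\star(r)<\tau^\star$.
   Context: An active search instance $(h^\star,\mathcal D)$: $\mathcal D$ is a distribution on $\mathbb R$ and $h^\star:\mathbb R\to[0,1]$ measurable; a candidate has score $R\sim\mathcal D$ and label $V$ with $\Pr(V=1\mid R=r)=h^\star(r)$. A streaming policy (which knows $(\mathcal D,h^\star)$) proceeds in rounds $i=1,2,\dots$: it draws a fresh score $R_i\sim\mathcal D$ (independent of the past), pays $c_{\mathrm{rew}}$, observes $R_i$, then chooses, as a possibly randomized function of the past history and $R_i$, an action in $\{\text{discard},\text{verify}\}$. Discard removes the candidate permanently. Verify pays $c_{\mathrm{ver}}$ and reveals $V_i$ with $V_i\mid R_i\sim\mathrm{Bernoulli}(h^\star(R_i))$. The policy stops only when it verifies a candidate with $V_i=1$. $J^\star_{\mathrm{str}}(h^\star,\mathcal D)$ is the infimum over streaming policies of the expected total cost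 (sum of all $c_{\mathrm{rew}}$ and $c_{\mathrm{ver}}$ payments until stopping). *)

From HB Require Import structures.
From mathcomp Require Import all_boot all_order all_algebra.
From mathcomp Require Import all_classical all_reals all_analysis.
Set Implicit Arguments. Unset Strict Implicit. Unset Printing Implicit Defensive.
Import Order.TTheory GRing.Theory Num.Theory.
Local Open Scope classical_set_scope.
Local Open Scope ring_scope.

Section ActiveSearch.
Variable R : realType.

(* One past round of a still-running streaming policy: the observed score and
   the action taken (true = verified, and the revealed label was V = 0, since
   the process did not stop; false = discarded).  A history of length n is an
   n-tuple of such rounds (most recent first). *)
Definition round := (R * bool)%type.

(* A (behavioural, possibly randomized) streaming policy: given the history of
   length n and the current score r, [pol n h r] is the probability of
   verifying the current candidate. *)
Definition streaming_policy := forall n : nat, n.-tuple round -> R -> R.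

Definition is_streaming_policy (pol : streaming_policy) : Prop :=
  forall n : nat,
    measurable_fun setT (fun p : n.-tuple round * R => pol n p.1 p.2) /\
    (forall (h : n.-tuple round) (r : R), 0 <= pol n h r <= 1).

(* Expected cost paid during the next N rounds, starting from history h of
   length n (c_rew paid for each drawn candidate, c_ver for each verification;
   the process stops upon a verification revealing V = 1, which happens with
   probability hstar r). *)
Fixpoint cost_horizon (D : probability R R) (hstar : R -> R) (crew cver : R)
  (pol : streaming_policy) (N : nat) : forall n : nat, n.-tuple round -> \bar R :=
  match N with
  | 0 => fun n _ => 0%E
  | N'.+1 => fun n h =>
      (crew%:E +
       \int[D]_r
         ((pol n h r * cver)%:E
          + (pol n h r * (1 - hstar r))%:E
              * cost_horizon D hstar crew cver pol N' [tuple of (r, true) :: h]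
          + (1 - pol n h r)%:E
              * cost_horizon D hstar crew cver pol N' [tuple of (r, false) :: h]))%E
  end.

(* Expected total cost of a policy (in [0, +oo]): the supremum (= limit, by
   monotone convergence) of the expected costs over the first N rounds. *)
Definition expected_cost (D : probability R R) (hstar : R -> R) (crew cver : R)
  (pol : streaming_policy) : \bar R :=
  ereal_sup (range (fun N => cost_horizon D hstar crew cver pol N ([tuple] : 0.-tuple round))).

Definition Jstar_str (D : probability R R) (hstar : R -> R) (crew cver : R) : \bar R :=
  ereal_inf [set expected_cost D hstar crew cver pol | pol in is_streaming_policy].

Definition threshold_policy (hstar : R -> R) (tau : R) : streaming_policy :=
  fun n _ r => if tau <= hstar r then 1 else 0.

End ActiveSearch.

From HB Require Import structures.
From mathcomp Require Import all_boot all_order all_algebra.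
From mathcomp Require Import all_classical all_reals all_analysis.
From mathcomp Require Import ring lra.
Import Order.TTheory GRing.Theory Num.Theory.
Import numFieldNormedType.Exports.
Local Open Scope classical_set_scope.
Local Open Scope ring_scope.

(** With F(t) = E[(hstar(R) - t)_+], the balance cver F(t) - t crew is
continuous, strictly decreasing, positive at 0 and negative at 1: its root is
tau.  Put V = cver / tau, so that crew = V F(tau).  If the candidate of score r
is verified with probability p and the rest of the process costs at least
w <= V, the round costs, besides crew, at least w (1 - (hstar(r) - tau)_+);
under the threshold rule, with a rest costing at most V, it costs at most
V - V (hstar(r) - tau)_+.  Integrating, the first N rounds cost at least
V (1 - (1 - F(tau))^N) under every policy and at most V under the threshold
rule; letting N grow gives both the value V and the optimality of the rule. *)

Section BoundedMeasurable.
Context {d} {T : measurableType d} {R : realType}.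
Implicit Types f g : T -> R.

Definition bounded_measurable f :=
  measurable_fun setT f /\ exists M, forall x, `|f x| <= M.

Lemma bounded_measurable_cst k : bounded_measurable (fun=> k).
Proof. by split; [exact: measurable_cst | exists `|k|]. Qed.

Lemma bounded_measurableB f g : bounded_measurable f -> bounded_measurable g ->
  bounded_measurable (fun x => f x - g x).
Proof.
move=> [mf [M Mf]] [mg [N Ng]]; split.
  exact: measurable_realfun.measurable_funB.
by exists (M + N) => x; apply: le_trans (ler_normB _ _) _; exact: lerD.
Qed.

Lemma bounded_measurableZl k f : bounded_measurable f ->
  bounded_measurable (fun x => k * f x).
Proof.
move=> [mf [M Mf]]; split.
  exact: measurable_realfun.measurable_funM (measurable_cst k) mf.
by exists (`|k| * M) => x; rewrite normrM ler_wpM2l.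
Qed.

Lemma bounded_measurable_max0 f : bounded_measurable f ->
  bounded_measurable (fun x => Num.max (f x) 0).
Proof.
move=> [mf [M Mf]]; split.
  by apply: (measurable_realfun.measurable_maxr mf); exact: measurable_cst.
exists M => x; rewrite maxEle; case: (leP (f x) 0) => // _.
by rewrite normr0 (le_trans _ (Mf x)).
Qed.

End BoundedMeasurable.

Section ProbabilityRintegral.
Context {d} {T : measurableType d} {R : realType} (P : probability T R).
Implicit Types f g : T -> R.

Lemma bounded_measurable_integrable f : bounded_measurable f ->
  P.-integrable setT (EFin \o f).
Proof.
move=> [mf [M Mf]]; apply: measurable_bounded_integrable => //.
  exact: le_lt_trans (probability_le1 P measurableT) (ltry 1).
exists M; split; first exact: num_real.
by move=> N MN x _; exact: le_trans (Mf x) (ltW MN).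
Qed.

Lemma integral_bounded_measurable f : bounded_measurable f ->
  (\int[P]_x (f x)%:E)%E = (\int[P]_x f x)%:E.
Proof.
move=> /bounded_measurable_integrable fi.
by rewrite fineK //; exact: integrable_fin_num.
Qed.

Lemma Rintegral_cst_probability k : \int[P]_x k = k.
Proof.
by rewrite Rintegral_cst // [fine _](congr1 fine (probability_setT P)) mulr1.
Qed.

Lemma RintegralB_bounded f g : bounded_measurable f -> bounded_measurable g ->
  \int[P]_x (f x - g x) = \int[P]_x f x - \int[P]_x g x.
Proof.
by move=> bf bg; rewrite RintegralB //; exact: bounded_measurable_integrable.
Qed.

Lemma RintegralZl_bounded k f : bounded_measurable f ->
  \int[P]_x (k * f x) = k * \int[P]_x f x.
Proof.
by move=> bf; rewrite RintegralZl //; exact: bounded_measurable_integrable.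
Qed.

Lemma le_Rintegral_bounded f g : bounded_measurable f -> bounded_measurable g ->
  (forall x, f x <= g x) -> \int[P]_x f x <= \int[P]_x g x.
Proof.
by move=> bf bg fg; rewrite le_Rintegral //; exact: bounded_measurable_integrable.
Qed.

Lemma cst_le_Rintegral a f : bounded_measurable f ->
  (forall x, a <= f x) -> a <= \int[P]_x f x.
Proof.
move=> bf af; rewrite -[leLHS](Rintegral_cst_probability a).
exact: le_Rintegral_bounded (bounded_measurable_cst a) bf af.
Qed.

Lemma Rintegral_le_cst b f : bounded_measurable f ->
  (forall x, f x <= b) -> \int[P]_x f x <= b.
Proof.
move=> bf fb; rewrite -[leRHS](Rintegral_cst_probability b).
exact: le_Rintegral_bounded bf (bounded_measurable_cst b) fb.
Qed.

End ProbabilityRintegral.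

(* The continuation values of an arbitrary policy need not be measurable in
   the score; for nonnegative functions the integral is a supremum over the
   simple functions below, so monotonicity survives. *)
Lemma ge0_le_integral_nonmeasurable {d} {T : measurableType d} {R : realType}
    (mu : {measure set T -> \bar R}) {f g : T -> \bar R} :
  (forall x, 0 <= f x)%E -> (forall x, f x <= g x)%E ->
  (\int[mu]_x f x <= \int[mu]_x g x)%E.
Proof.
move=> f0 fg; have g0 x : (0 <= g x)%E := le_trans (f0 x) (fg x).
rewrite !ge0_integralTE //; apply: ereal_sup_le => _ [s sf <-].
by exists s => // x; exact: le_trans (sf x) (fg x).
Qed.

Lemma lipschitz_continuous {R : realType} (f : R -> R) (k : R) : 0 < k ->
  (forall x y, `|f x - f y| <= k * `|x - y|) -> continuous f.
Proof.
move=> k0 fk x; apply/cvgrPdist_le => e e0.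
have ek0 : 0 < e / k by rewrite divr_gt0.
have /cvgr_dist_le /(_ _ ek0) := @cvg_id _ (nbhs x); apply: filterS => y xy.
by apply: le_trans (fk x y) _; rewrite -ler_pdivlMl // mulrC.
Qed.

Lemma ereal_sup_ge_geometric {R : realType} (u : nat -> \bar R) (V z : R) :
  0 <= z < 1 -> (forall N, ((V - V * z ^+ N)%:E <= u N)%E) ->
  (V%:E <= ereal_sup (range u))%E.
Proof.
move=> /andP[z0 z1] uge.
have zN : (z ^+ N) @[N --> \oo] --> (0 : R) by apply: cvg_expr; rewrite ger0_norm.
have vN : (V - V * z ^+ N) @[N --> \oo] --> V.
  rewrite -[X in _ --> X]subr0 -[X in _ --> _ - X](mulr0 V).
  by apply: cvgB; [exact: cvg_cst | exact: cvgMr].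
have evN : ((V - V * z ^+ N)%:E)%E @[N --> \oo] --> V%:E.
  by apply: cvg_EFin; [exact: nearW | exact: vN].
rewrite -(cvg_lim _ evN) //; apply: lime_le; first by apply/cvg_ex; exists V%:E.
by apply: nearW => N; apply: le_trans (uge N) _; apply: ereal_sup_ubound; exists N.
Qed.

Definition round_cost {R : realType} (c p x : R) (X Y : \bar R) : \bar R :=
  ((p * c)%:E + (p * (1 - x))%:E * X + (1 - p)%:E * Y)%E.

Lemma round_cost_EFin {R : realType} (c p x w : R) :
  round_cost c p x w%:E w%:E = (p * c + p * (1 - x) * w + (1 - p) * w)%:E.
Proof. by rewrite /round_cost -!EFinM -!EFinD. Qed.

Lemma round_cost_ge0 {R : realType} {c p x : R} {X Y : \bar R} :
  0 <= c -> 0 <= p <= 1 -> x <= 1 -> (0 <= X)%E -> (0 <= Y)%E ->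
  (0 <= round_cost c p x X Y)%E.
Proof.
move=> c0 /andP[p0 p1] x1 X0 Y0.
by rewrite !adde_ge0 ?mule_ge0 ?lee_fin ?mulr_ge0 ?subr_ge0.
Qed.

Lemma le_round_cost {R : realType} {c p x : R} {X X' Y Y' : \bar R} :
  0 <= p <= 1 -> x <= 1 -> (X <= X')%E -> (Y <= Y')%E ->
  (round_cost c p x X Y <= round_cost c p x X' Y')%E.
Proof.
move=> /andP[p0 p1] x1 XX YY.
by rewrite leeD ?leeD2l ?lee_wpmul2l ?lee_fin ?mulr_ge0 ?subr_ge0.
Qed.

(* Whatever the verification probability p, a round whose continuation costs
   w <= V = c / t costs at least w (1 - (x - t)_+): the saving from verifying,
   p (x w - c), is at most w (x - t)_+ because c = V t >= w t. *)
Lemma round_cost_lower_bound {R : realType} {c p x w V t : R} :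
  0 <= t -> c = V * t -> 0 <= p <= 1 -> 0 <= w <= V ->
  w - w * Num.max (x - t) 0 <= p * c + p * (1 - x) * w + (1 - p) * w.
Proof.
move=> t0 -> /andP[p0 p1] /andP[w0 wV]; set m := Num.max (x - t) 0.
have m_ge0 : 0 <= m by rewrite le_max lexx orbT.
have saving_le : x * w - V * t <= w * m.
  have : x - t <= m by rewrite le_max lexx.
  nra.
have := ler_wpM2l p0 saving_le.
have : p * (w * m) <= w * m by rewrite ler_piMl // mulr_ge0.
lra.
Qed.

Lemma threshold_round_cost {R : realType} (x w t : R)
    (p := if t <= x then 1 else 0 : R) :
  p * (w * t) + p * (1 - x) * w + (1 - p) * w = w - w * Num.max (x - t) 0.
Proof.
rewrite /p; case: (leP t x) => tx.
  by rewrite max_l ?subr_ge0 //; ring.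
by rewrite max_r ?subr_le0 ?(ltW tx) //; ring.
Qed.

Section StreamingSearch.
Context {R : realType} {D : probability R R} {h : R -> R} {crew cver : R}.
Hypothesis h_meas : measurable_fun setT h.
Hypothesis h01 : forall r, 0 <= h r <= 1.
Hypothesis crew_gt0 : 0 < crew.
Hypothesis cver_gt0 : 0 < cver.

Definition excess (t r : R) := Num.max (h r - t) 0.
Definition mean_excess t := \int[D]_r excess t r.
Definition balance t := cver * mean_excess t - t * crew.

Lemma bounded_measurable_h : bounded_measurable h.
Proof.
by split=> //; exists 1 => r; have /andP[h0 h1] := h01 r; rewrite ger0_norm.
Qed.

Lemma bounded_measurable_excess t : bounded_measurable (excess t).
Proof.
apply: bounded_measurable_max0; apply: bounded_measurableB.
  exact: bounded_measurable_h.
exact: bounded_measurable_cst.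
Qed.

Lemma excess_ge0 t r : 0 <= excess t r.
Proof. by rewrite /excess le_max lexx orbT. Qed.

Lemma excess_le1 t r : 0 <= t -> excess t r <= 1.
Proof. by move=> t0; rewrite /excess ge_max ler01 andbT; have := h01 r; lra. Qed.

Lemma integral_excess t : (\int[D]_r (excess t r)%:E)%E = (mean_excess t)%:E.
Proof. exact/integral_bounded_measurable/bounded_measurable_excess. Qed.

Lemma bounded_measurable_affine_excess a b t :
  bounded_measurable (fun r => a - b * excess t r).
Proof.
apply: bounded_measurableB; first exact: bounded_measurable_cst.
exact/bounded_measurableZl/bounded_measurable_excess.
Qed.

Lemma integral_affine_excess a b t :
  (\int[D]_r (a - b * excess t r)%:E)%E = (a - b * mean_excess t)%:E.
Proof.
rewrite integral_bounded_measurable; last exact: bounded_measurable_affine_excess.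
rewrite RintegralB_bounded ?RintegralZl_bounded ?Rintegral_cst_probability //.
- exact: bounded_measurable_excess.
- exact: bounded_measurable_cst.
- exact/bounded_measurableZl/bounded_measurable_excess.
Qed.

Lemma mean_excess_sub {t s} : t <= s ->
  0 <= mean_excess t - mean_excess s <= s - t.
Proof.
move=> ts; have excess_sub r : 0 <= excess t r - excess s r <= s - t.
  rewrite /excess !maxEle.
  by case: (leP (h r - t) 0); case: (leP (h r - s) 0); lra.
have bd : bounded_measurable (fun r => excess t r - excess s r).
  by apply: bounded_measurableB; exact: bounded_measurable_excess.
rewrite /mean_excess -RintegralB_bounded; try exact: bounded_measurable_excess.
by apply/andP; split; [apply: cst_le_Rintegral | apply: Rintegral_le_cst] => // r;
  have /andP[] := excess_sub r.
Qed.

Lemma balance_decreasing : {homo balance : t s /~ t < s}.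
Proof.
move=> t s ts; have /andP[F0 _] := mean_excess_sub (ltW ts).
have := mulr_ge0 (ltW cver_gt0) F0.
have : 0 < crew * (t - s) by rewrite pmulr_rgt0 // subr_gt0.
rewrite /balance; lra.
Qed.

Lemma balance_lipschitz t s :
  `|balance t - balance s| <= (cver + crew) * `|t - s|.
Proof.
wlog ts : t s / t <= s.
  move=> H; case: (leP t s) => [|/ltW] ts; first exact: H.
  by rewrite distrC [`|t - s|]distrC; exact: H.
have /andP[F0 F1] := mean_excess_sub ts.
have := ler_wpM2l (ltW cver_gt0) F1; have := mulr_ge0 (ltW cver_gt0) F0.
have : 0 <= crew * (s - t) by rewrite pmulr_rge0 // subr_ge0.
rewrite [`|t - s|]distrC [`|s - t|]ger0_norm ?subr_ge0 // ler_norml /balance.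
lra.
Qed.

Lemma balance_continuous : continuous balance.
Proof.
exact: lipschitz_continuous (addr_gt0 cver_gt0 crew_gt0) balance_lipschitz.
Qed.

Lemma balance0_gt0 : (0 < \int[D]_r (h r)%:E)%E -> 0 < balance 0.
Proof.
rewrite integral_bounded_measurable ?lte_fin; last exact: bounded_measurable_h.
move=> Eh_gt0; rewrite /balance mul0r subr0 pmulr_rgt0 //.
apply: lt_le_trans Eh_gt0 _; apply: le_Rintegral_bounded.
- exact: bounded_measurable_h.
- exact: bounded_measurable_excess.
- by move=> r; rewrite /excess subr0 le_max lexx.
Qed.

Lemma balance1_lt0 : balance 1 < 0.
Proof.
have F1 : mean_excess 1 <= 0.
  apply: Rintegral_le_cst; first exact: bounded_measurable_excess.
  by move=> r; rewrite /excess ge_max lexx andbT subr_le0; have /andP[] := h01 r.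
by rewrite /balance mul1r subr_lt0 (le_lt_trans _ crew_gt0) // pmulr_rle0.
Qed.

Lemma exists_balance_root : (0 < \int[D]_r (h r)%:E)%E ->
  exists2 t, 0 < t < 1 & balance t = 0.
Proof.
move=> /balance0_gt0 b0; have b1 := balance1_lt0.
have : Num.min (balance 0) (balance 1) <= 0 <= Num.max (balance 0) (balance 1).
  by rewrite ge_min le_max (ltW b0) (ltW b1) orbT.
have cont01 : {within `[0, 1], continuous balance}.
  exact/continuous_subspaceT/balance_continuous.
case/(IVT ler01 cont01) => t; rewrite in_itv /= => /andP[t0 t1] bt.
exists t => //; rewrite !lt_neqAle t0 t1 !andbT; apply/andP; split.
- by apply: contraTneq b0 => t_eq; move: bt; rewrite -t_eq => ->; rewrite ltxx.
- by apply: contraTneq b1 => t_eq; move: bt; rewrite t_eq => ->; rewrite ltxx.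
Qed.

Lemma balance_root_unique t s : balance t = 0 -> balance s = 0 -> t = s.
Proof.
move=> bt bs; case: (ltgtP t s) => // ts; have := balance_decreasing _ _ ts;
  by rewrite bt bs ltxx.
Qed.

Lemma balance_eq0 t :
  (cver%:E * \int[D]_r (excess t r)%:E = (t * crew)%:E)%E <-> balance t = 0.
Proof.
rewrite integral_excess -EFinM /balance; split => [[->]|/eqP]; first exact: subrr.
by rewrite subr_eq0 => /eqP ->.
Qed.

Lemma threshold_streaming_policy t : is_streaming_policy (threshold_policy h t).
Proof.
move=> n; split => [|hist r].
  apply: measurableT_comp (measurable_snd); apply: measurable_fun_ifT.
  - by apply: measurable_realfun.measurable_fun_ler => //; exact: measurable_cst.
  - exact: measurable_cst.
  - exact: measurable_cst.
by rewrite /threshold_policy; case: ifP; rewrite ?lexx ?ler01.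
Qed.

Lemma cost_horizonS pol N n (hist : n.-tuple (round R)) :
  cost_horizon D h crew cver pol N.+1 hist =
  (crew%:E + \int[D]_r round_cost cver (pol n hist r) (h r)
     (cost_horizon D h crew cver pol N [tuple of (r, true) :: hist])
     (cost_horizon D h crew cver pol N [tuple of (r, false) :: hist]))%E.
Proof. by []. Qed.

Section OptimalCost.
Variable tau : R.
Hypothesis tau_gt0 : 0 < tau.
Hypothesis balance_tau : balance tau = 0.

Local Notation V := (cver / tau).
Local Notation rho := (1 - mean_excess tau).

Lemma cver_eq : cver = V * tau.
Proof. by rewrite divfK // gt_eqF. Qed.

Lemma crew_eq : crew = V * mean_excess tau.
Proof.
move/eqP: balance_tau; rewrite subr_eq0 => /eqP Fcrew.
apply: (mulIf (x := tau)); first by rewrite gt_eqF.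
by rewrite mulrAC -cver_eq Fcrew mulrC.
Qed.

Lemma V_gt0 : 0 < V.
Proof. exact: divr_gt0. Qed.

Lemma rho_ge0 : 0 <= rho.
Proof.
rewrite subr_ge0; apply: Rintegral_le_cst; first exact: bounded_measurable_excess.
by move=> r; apply: excess_le1; exact: ltW.
Qed.

Lemma rho_lt1 : rho < 1.
Proof. by rewrite ltrBlDl ltrDr -(pmulr_rgt0 _ V_gt0) -crew_eq. Qed.

Lemma cost_horizon_ge pol : is_streaming_policy pol ->
  forall N n (hist : n.-tuple (round R)),
  ((V - V * rho ^+ N)%:E <= cost_horizon D h crew cver pol N hist)%E.
Proof.
move=> polP; elim=> [|N IH] n hist; first by rewrite expr0 mulr1 subrr.
set w := V - V * rho ^+ N.
have w0V : 0 <= w <= V.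
  have := exprn_ge0 N rho_ge0; have := exprn_ile1 N rho_ge0 (ltW rho_lt1).
  have := V_gt0; rewrite /w; nra.
rewrite cost_horizonS; apply: le_trans (leeD2l _ (ge0_le_integral_nonmeasurable D
  (f := fun r => (w - w * excess tau r)%:E) _ _)) => [|r|r].
- rewrite integral_affine_excess -EFinD lee_fin crew_eq /w exprS.
  by rewrite le_eqVlt; apply/orP; left; apply/eqP; ring.
- have := excess_le1 tau r (ltW tau_gt0); have := excess_ge0 tau r.
  by rewrite lee_fin; case/andP: w0V; nra.
- have p01 := (polP n).2 hist r; have /andP[_ h1] := h01 r.
  apply: le_trans (le_round_cost p01 h1 (IH _ _) (IH _ _)).
  rewrite round_cost_EFin lee_fin.
  exact: round_cost_lower_bound (ltW tau_gt0) cver_eq p01 w0V.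
Qed.

Lemma threshold_cost_horizon_le N n (hist : n.-tuple (round R)) :
  (cost_horizon D h crew cver (threshold_policy h tau) N hist <= V%:E)%E.
Proof.
elim: N n hist => [|N IH] n hist; first by rewrite lee_fin ltW ?V_gt0.
have p01 r := (threshold_streaming_policy tau n).2 hist r.
have cost_ge0 r b : (0 <= cost_horizon D h crew cver (threshold_policy h tau) N
                          [tuple of (r, b) :: hist])%E.
  apply: le_trans (cost_horizon_ge _ (threshold_streaming_policy tau) _ _ _).
  have := exprn_ile1 N rho_ge0 (ltW rho_lt1); have := V_gt0.
  by rewrite lee_fin; nra.
rewrite cost_horizonS; apply: le_trans (leeD2l _ (ge0_le_integral_nonmeasurable D
  (g := fun r => (V - V * excess tau r)%:E) _ _)) _ => [r|r|].
- have /andP[_ h1] := h01 r.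
  exact: round_cost_ge0 (ltW cver_gt0) (p01 r) h1 (cost_ge0 _ _) (cost_ge0 _ _).
- have /andP[_ h1] := h01 r.
  apply: le_trans (le_round_cost (p01 r) h1 (IH _ _) (IH _ _)) _.
  by rewrite round_cost_EFin lee_fin {1}cver_eq threshold_round_cost.
- by rewrite integral_affine_excess -EFinD lee_fin crew_eq addrC subrK.
Qed.

Lemma expected_cost_ge pol : is_streaming_policy pol ->
  (V%:E <= expected_cost D h crew cver pol)%E.
Proof.
move=> polP; apply: (@ereal_sup_ge_geometric _ _ _ rho).
  by rewrite rho_ge0 rho_lt1.
by move=> N; exact: cost_horizon_ge.
Qed.

Lemma expected_cost_threshold :
  expected_cost D h crew cver (threshold_policy h tau) = V%:E.
Proof.
apply/le_anti/andP; split; last exact/expected_cost_ge/threshold_streaming_policy.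
by apply: ub_ereal_sup => _ [N _ <-]; exact: threshold_cost_horizon_le.
Qed.

Lemma Jstar_str_eq : Jstar_str D h crew cver = V%:E.
Proof.
apply/le_anti/andP; split.
  rewrite -expected_cost_threshold; apply: ereal_inf_lbound.
  by exists (threshold_policy h tau) => //; exact: threshold_streaming_policy.
by apply: le_ereal_inf_tmp => _ [pol polP <-]; exact: expected_cost_ge.
Qed.

End OptimalCost.
End StreamingSearch.

Theorem lemma1 (R : realType) (D : probability R R) (hstar : R -> R)
  (crew cver : R)
  (hmeas : measurable_fun setT hstar)
  (hrange : forall r : R, 0 <= hstar r <= 1)
  (hpos : (0 < \int[D]_r (hstar r)%:E)%E)
  (crew_pos : 0 < crew) (cver_pos : 0 < cver) :
  exists tau : R,
    [/\ 0 < tau < 1,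
        (cver%:E * \int[D]_r (Num.max (hstar r - tau) 0)%:E = (tau * crew)%:E)%E,
        (forall tau' : R, 0 < tau' < 1 ->
           (cver%:E * \int[D]_r (Num.max (hstar r - tau') 0)%:E = (tau' * crew)%:E)%E ->
           tau' = tau),
        Jstar_str D hstar crew cver = (cver / tau)%:E
      & is_streaming_policy (threshold_policy hstar tau) /\
        expected_cost D hstar crew cver (threshold_policy hstar tau) = (cver / tau)%:E].
Proof.
have [tau /andP[tau_gt0 tau_lt1] root] :=
  exists_balance_root hmeas hrange crew_pos cver_pos hpos.
exists tau; split.
- by rewrite tau_gt0 tau_lt1.
- exact/(balance_eq0 hmeas hrange).
- move=> tau' _ /(balance_eq0 hmeas hrange) root'.
  exact: balance_root_unique hmeas hrange crew_pos cver_pos _ _ root' root.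
- exact: Jstar_str_eq hmeas hrange crew_pos cver_pos _ tau_gt0 root.
- split; first exact: threshold_streaming_policy.
  exact: expected_cost_threshold hmeas hrange crew_pos cver_pos _ tau_gt0 root.
Qed.
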